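(* Let $\underline{\lambda}=(\lambda_1\ge\dots\ge\lambda_{n+1})$ and $\underline{\mu}=(\mu_1\ge\dots\ge\mu_n)$ be real sequences such that there exists $p\in\mathcal{O}_\Lambda$ whose bottom-right $n\times n$ principal submatrix is $\mathrm{diag}(\mu_1,\dots,\mu_n)$ (equivalently, $\lambda_1\ge\mu_1\ge\lambda_2\ge\dots\ge\mu_n\ge\lambda_{n+1}$). Let $\mu\in[\underline{\mu}]$ be such that the component of the interlacing pattern of $(\underline{\lambda},\underline{\mu})$ labelled $\mu$ is not an M-shape. Then $C_\mu=0$ if and only if the component labelled $\mu$ is a W-shape.
   Context: $\mathcal{O}_\Lambda$ is the set of $(n+1)\times(n+1)$ Hermitian matrices with eigenvalues $\lambda_1,\dots,\lambda_{n+1}$. Notation: $[\underline{\tau}]$ is the set of distinct values of a finite sequence $\underline{\tau}$, $n_v(\underline{\tau})$ the number of occurrences of $v$ in it. For each value $v$ occurring in $\underline{\lambda}$ or $\underline{\mu}$, the component of the interlacing pattern labelled $v$ is an M-shape if $n_v(\underline{\mu})=n_v(\underline{\lambda})+1$, a W-shape if $n_v(\underline{\lambda})=n_v(\underline{\mu})+1$, and a parallelogram-shape if $n_v(\underline{\lambda})=n_v(\underline{\mu})$ (exactly one of these holds). For $\tau\in[\underline{\mu}]$ with M-shape component, $r_\tau>0$ is defined by $r_\tau^2=-\prod_{\lambda\in[\underline{\lambda}],\,\text{W-shape}}(\tau-\lambda)\prod_{\sigma\in[\underline{\mu}],\,\text{M-shape},\,\sigma\ne\tau}\frac{1}{\tau-\sigma}$;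 otherwise $r_\tau=0$. For $\mu\in[\underline{\mu}]$ whose component is not an M-shape, $C_\mu=\sum_{i=1}^{n+1}\lambda_i-\sum_{i=1}^n\mu_i-\mu+\sum_{\tau\in[\underline{\mu}],\,\text{M-shape}}\frac{r_\tau^2}{\mu-\tau}$. *)

From mathcomp Require Import all_boot all_order all_algebra.
Set Implicit Arguments. Unset Strict Implicit. Unset Printing Implicit Defensive.
Import Order.TTheory GRing.Theory Num.Theory.
Local Open Scope ring_scope.

(* lam i = lambda_{i+1} (i < n+1), mu i = mu_{i+1} (i < n). *)
Section Interlacing.
Variables (R : rcfType) (n : nat) (lam : 'I_n.+1 -> R) (mu : 'I_n -> R).

Definition cnt_lam (v : R) : nat := #|[set i | lam i == v]|.
Definition cnt_mu (v : R) : nat := #|[set i | mu i == v]|.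

Definition vals_lam : seq R := undup [seq lam i | i <- enum 'I_n.+1].
Definition vals_mu : seq R := undup [seq mu i | i <- enum 'I_n].

Definition is_M (v : R) : bool := cnt_mu v == (cnt_lam v).+1.
Definition is_W (v : R) : bool := cnt_lam v == (cnt_mu v).+1.
Definition is_P (v : R) : bool := cnt_lam v == cnt_mu v.

Definition r2_expr (tau : R) : R :=
  - (\prod_(l <- vals_lam | is_W l) (tau - l))
  * \prod_(s <- vals_mu | is_M s && (s != tau)) (tau - s)^-1.

Definition r_ (tau : R) : R :=
  if (tau \in vals_mu) && is_M tau then Num.sqrt (r2_expr tau) else 0.

Definition C_ (m : R) : R :=
  \sum_(i < n.+1) lam i - \sum_(i < n) mu i - m
  + \sum_(t <- vals_mu | is_M t) (r_ t ^+ 2 / (m - t)).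

End Interlacing.

From mathcomp Require Import all_boot all_order all_algebra.
From mathcomp Require Import zify ring.
Set Implicit Arguments. Unset Strict Implicit. Unset Printing Implicit Defensive.
Import Order.TTheory GRing.Theory Num.Theory.
Local Open Scope ring_scope.

(* Interlacing forces every value to occur in lambda at most once more or at
   most once less than in mu, so the multisets {lambda_i} + [M] and
   {mu_j} + [W] coincide, where [W] and [M] are the sets of W-shape and
   M-shape values.  Hence |[W]| = |[M]| + 1 and sum lambda - sum mu =
   sum [W] - sum [M], and the partial fraction expansion of
   prod_{w in [W]} (z - w) / prod_{s in [M]} (z - s) evaluated at m not in [M]
   is exactly - C_m: its residue at t in [M] is - r_t^2, which requires this
   residue to be negative, a sign count using #{w in [W] | w > t} =
   #{s in [M] | s > t} + 1.  So C_m = 0 iff m is a root of prod (z - w). *)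

Section PartialFractions.
Variable F : fieldType.
Implicit Types (W M : seq F) (z : F).

Definition residue W M s :=
  \prod_(w <- W) (s - w) / \prod_(t <- M | t != s) (s - t).

Lemma prod_subr_eq0 (s : seq F) z : (\prod_(x <- s) (z - x) == 0) = (z \in s).
Proof.
rewrite prodf_seq_eq0; apply/hasP/idP => [[x xs /=]|zs]; last by exists z; rewrite /= ?subrr.
by rewrite subr_eq0 => /eqP ->.
Qed.

Lemma horner_prod_XsubC (T : Type) (r : seq T) (P : pred T) (f : T -> F) z :
  (\prod_(i <- r | P i) ('X - (f i)%:P)).[z] = \prod_(i <- r | P i) (z - f i).
Proof. by rewrite horner_prod; apply: eq_bigr => i _; rewrite hornerXsubC. Qed.

(* The coefficient of 'X^k in each product is minus the sum of its roots. *)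
Lemma size_prod_XsubC_subr_leq (L1 L2 : seq F) k :
  size L1 = k.+1 -> size L2 = k.+1 -> \sum_(x <- L1) x = \sum_(x <- L2) x ->
  (size (\prod_(x <- L1) ('X - x%:P) - \prod_(x <- L2) ('X - x%:P))%R <= k)%N.
Proof.
move=> sz1 sz2 sumE; apply/leq_sizeP => j; rewrite coefB.
have szp1 := size_prod_XsubC L1 id; have szp2 := size_prod_XsubC L2 id.
rewrite sz1 in szp1; rewrite sz2 in szp2.
rewrite leq_eqVlt => /orP[/eqP <-|].
  have := @coefPn_prod_XsubC _ L1; rewrite sz1 => -> //.
  by have := @coefPn_prod_XsubC _ L2; rewrite sz2 sumE => -> //; rewrite subrr.
rewrite leq_eqVlt => /orP[/eqP <-|lt_j].
  have /monicP := monic_prod_XsubC L1 predT id; rewrite /lead_coef szp1 => ->.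
  by have /monicP := monic_prod_XsubC L2 predT id; rewrite /lead_coef szp2 => ->; rewrite subrr.
by rewrite !nth_default ?subrr ?szp1 ?szp2.
Qed.

Variables (W M : seq F).
Hypotheses (uniq_M : uniq M) (size_WM : size W = (size M).+1).

Lemma prod_subr_lagrange z :
  \prod_(w <- W) (z - w) =
    (z - (\sum_(w <- W) w - \sum_(s <- M) s)) * \prod_(s <- M) (z - s)
    + \sum_(s <- M) residue W M s * \prod_(t <- M | t != s) (z - t).
Proof.
set a := \sum_(w <- W) w - \sum_(s <- M) s.
pose D := \prod_(w <- W) ('X - w%:P) - \prod_(x <- a :: M) ('X - x%:P)
   - \sum_(s <- M) residue W M s *: \prod_(t <- M | t != s) ('X - t%:P).
have D_at z' : D.[z'] = \prod_(w <- W) (z' - w) - (z' - a) * \prod_(s <- M) (z' - s)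
    - \sum_(s <- M) residue W M s * \prod_(t <- M | t != s) (z' - t).
  rewrite !hornerE horner_sum !horner_prod_XsubC big_cons.
  by congr (_ - _); apply: eq_bigr => s _; rewrite hornerZ horner_prod_XsubC.
have D0 : D = 0.
  apply: (roots_geq_poly_eq0 _ uniq_M).
    apply/allP => s sM; rewrite /root D_at (bigD1_seq s sM uniq_M) /= subrr.
    rewrite mul0r mulr0 subr0 (bigD1_seq s sM uniq_M) /=.
    have -> : \sum_(t <- M | t != s) residue W M t * \prod_(u <- M | u != t) (s - u) = 0.
      rewrite big1_seq // => t /andP[ts _]; apply/eqP.
      by rewrite mulf_eq0 -big_filter prod_subr_eq0 mem_filter sM andbT (eq_sym s) ts orbT.
    by rewrite addr0 mulfVK ?subrr // -big_filter prod_subr_eq0 mem_filter eqxx.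
  apply: leq_trans (size_polyD _ _) _; rewrite geq_max size_polyN.
  apply/andP; split.
    by apply: size_prod_XsubC_subr_leq => //; rewrite big_cons subrK.
  apply: leq_trans (size_sum _ _ _) _; apply/bigmax_leqP_seq => s sM _.
  apply: leq_trans (size_scale_leq _ _) _.
  rewrite -big_filter size_prod_XsubC -(rem_filter _ uniq_M) size_rem //.
  by case: (M) sM.
by move/eqP: (D_at z); rewrite D0 horner0 eq_sym subr_eq0 subr_eq addrC => /eqP.
Qed.

Lemma prod_subr_partial_fraction z : z \notin M ->
  \prod_(w <- W) (z - w) / \prod_(s <- M) (z - s) =
    z - (\sum_(w <- W) w - \sum_(s <- M) s) + \sum_(s <- M) residue W M s / (z - s).
Proof.
move=> zM; have PM_neq0 : \prod_(s <- M) (z - s) != 0 by rewrite prod_subr_eq0.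
rewrite prod_subr_lagrange (mulrDl _ _ _^-1) mulfK // mulr_suml; congr (_ + _).
apply: eq_big_seq => s sM; rewrite (bigD1_seq s sM uniq_M) /=.
move: PM_neq0; rewrite (bigD1_seq s sM uniq_M) mulf_eq0 negb_or => /andP[zs PMs_neq0].
by field; rewrite zs PMs_neq0.
Qed.

End PartialFractions.

Lemma prod_subr_sign (R : realDomainType) (s : seq R) t : t \notin s ->
  0 < (-1) ^+ count (fun x => t < x) s * \prod_(x <- s) (t - x).
Proof.
elim: s => [|x s IHs]; first by rewrite big_nil mulr1.
rewrite in_cons negb_or big_cons /= => /andP[tx /IHs sign_s].
have [lt_tx|lt_xt|eq_tx] := ltgtP t x; last by rewrite eq_tx eqxx in tx.
  set c := count _ s; set P := \prod_(_ <- s) _ in sign_s *.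
  have -> : (-1) ^+ (1 + c) * ((t - x) * P) = (x - t) * ((-1) ^+ c * P) by rewrite exprS; ring.
  by apply: mulr_gt0; rewrite ?subr_gt0.
by rewrite add0n mulrCA; apply: mulr_gt0; rewrite ?subr_gt0.
Qed.

Lemma count_le_eq_lt (R : realDomainType) (s : seq R) t :
  count (fun x => t <= x) s = (count_mem t s + count (fun x => (t < x)%R) s)%N.
Proof. by elim: s => //= x s ->; case: ltgtP => _ /=; lia. Qed.

Lemma card_set_preim (T : finType) (U : eqType) (f : T -> U) (p : pred U) :
  #|[set x | p (f x)]| = count p (codom f).
Proof. by rewrite -sum1dep_card -sum1_count big_image_cond. Qed.

Section Interlacing.
Variables (R : rcfType) (n : nat) (lam : 'I_n.+1 -> R) (mu : 'I_n -> R).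
Hypothesis interlacing :
  forall i : 'I_n, mu i <= lam (widen_ord (leqnSn n) i) /\ lam (lift ord0 i) <= mu i.

Lemma count_codom_interlacing (p : pred R) : (forall x y, x <= y -> p x -> p y) ->
  (count p (codom mu) <= count p (codom lam) <= (count p (codom mu)).+1)%N.
Proof.
move=> p_up; rewrite -!card_set_preim; apply/andP; split.
  have widen_inj : injective (widen_ord (leqnSn n)) by move=> i j [/val_inj].
  rewrite -(card_imset _ widen_inj); apply/subset_leq_card/subsetP => _ /imsetP[j pj ->].
  by rewrite inE in pj; rewrite inE; apply: (p_up _ _ _ pj); apply: (interlacing j).1.
apply: (@leq_trans #|ord0 |: lift ord0 @: [set j | p (mu j)]|).
  apply/subset_leq_card/subsetP => i; rewrite !inE.
  have [j ->|->] := unliftP ord0 i; last by rewrite eqxx.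
  move=> pj; rewrite mem_imset ?inE; last exact: lift_inj.
  by apply/orP; right; apply: (p_up _ _ (interlacing j).2 pj).
by rewrite cardsU1 card_imset; [case: (ord0 \notin _) | exact: lift_inj].
Qed.

Lemma cnt_lamE v : cnt_lam lam v = count_mem v (codom lam).
Proof. exact: card_set_preim. Qed.

Lemma cnt_muE v : cnt_mu mu v = count_mem v (codom mu).
Proof. exact: card_set_preim. Qed.

Local Notation gt_lam t := (count (fun x => t < x) (codom lam)).
Local Notation gt_mu t := (count (fun x => t < x) (codom mu)).

Lemma count_interlacing_at t :
  (gt_mu t <= gt_lam t <= (gt_mu t).+1)%N /\
  (cnt_mu mu t + gt_mu t <= cnt_lam lam t + gt_lam t <= (cnt_mu mu t + gt_mu t).+1)%N.
Proof.
have lt_up x y : x <= y -> t < x -> t < y by move=> le_xy /lt_le_trans; apply.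
have le_up x y : x <= y -> t <= x -> t <= y by move=> le_xy /le_trans; apply.
have := count_codom_interlacing le_up; rewrite !count_le_eq_lt -cnt_lamE -cnt_muE.
by move=> le_bounds; split; [apply: count_codom_interlacing lt_up | apply: le_bounds].
Qed.

Lemma cnt_shapes v : [|| is_M lam mu v, is_W lam mu v | is_P lam mu v].
Proof. by have := count_interlacing_at v; rewrite /is_M /is_W /is_P; do 3 case: eqP => //=; lia. Qed.

Lemma count_gt_M t : is_M lam mu t -> gt_lam t = (gt_mu t).+1.
Proof. by have := count_interlacing_at t; rewrite /is_M => + /eqP; lia. Qed.

Definition W_vals := [seq v <- vals_lam lam | is_W lam mu v].
Definition M_vals := [seq v <- vals_mu mu | is_M lam mu v].

Lemma uniq_W_vals : uniq W_vals.
Proof. exact/filter_uniq/undup_uniq. Qed.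

Lemma uniq_M_vals : uniq M_vals.
Proof. exact/filter_uniq/undup_uniq. Qed.

Lemma mem_W_vals v : (v \in W_vals) = is_W lam mu v.
Proof.
rewrite mem_filter andb_idr // => /eqP cnt_W.
by rewrite mem_undup -has_pred1 has_count -cnt_lamE cnt_W.
Qed.

Lemma mem_M_vals v : (v \in M_vals) = is_M lam mu v.
Proof.
rewrite mem_filter andb_idr // => /eqP cnt_M.
by rewrite mem_undup -has_pred1 has_count -cnt_muE cnt_M.
Qed.

Lemma perm_codom_shapes : perm_eq (codom lam ++ M_vals) (codom mu ++ W_vals).
Proof.
apply/allP => v _; apply/eqP; rewrite !count_cat.
rewrite (count_uniq_mem _ uniq_W_vals) (count_uniq_mem _ uniq_M_vals).
rewrite mem_W_vals mem_M_vals -cnt_lamE -cnt_muE.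
by have := cnt_shapes v; rewrite /is_M /is_W /is_P; case/or3P => /eqP ->; lia.
Qed.

Lemma size_W_vals : size W_vals = (size M_vals).+1.
Proof.
have := perm_size perm_codom_shapes; rewrite !size_cat !size_codom !card_ord.
by rewrite addSn -addnS => /eqP; rewrite eqn_add2l => /eqP <-.
Qed.

Lemma sum_W_vals_sub_M_vals :
  \sum_(w <- W_vals) w - \sum_(s <- M_vals) s = \sum_i lam i - \sum_i mu i.
Proof.
have := @perm_big R +%R 0 R _ _ predT id perm_codom_shapes; rewrite !big_cat !big_image /=.
by move=> sumE; apply/eqP; rewrite subr_eq eq_sym addrAC subr_eq sumE addrC.
Qed.

Lemma count_gt_W_vals t : is_M lam mu t ->
  count (fun x => t < x) W_vals = (count (fun x => t < x) M_vals).+1.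
Proof.
move=> Mt; have /permP/(_ (fun x => t < x)) := perm_codom_shapes.
by rewrite !count_cat count_gt_M // addSn -addnS => /eqP; rewrite eqn_add2l => /eqP <-.
Qed.

Lemma r2_exprE t : r2_expr lam mu t = - residue W_vals M_vals t.
Proof. by rewrite /r2_expr /residue !big_filter big_filter_cond prodfV mulNr. Qed.

Lemma residue_lt0 t : is_M lam mu t -> residue W_vals M_vals t < 0.
Proof.
move=> Mt; have tW : t \notin W_vals.
  by rewrite mem_W_vals; move: Mt; rewrite /is_M /is_W => /eqP ->; lia.
have PW_sign : 0 < (-1) ^+ (count (fun x => t < x) M_vals).+1 * \prod_(w <- W_vals) (t - w).
  by rewrite -count_gt_W_vals //; exact: prod_subr_sign.
have PM_sign : 0 < (-1) ^+ count (fun x => t < x) M_vals * \prod_(s <- M_vals | s != t) (t - s).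
  have -> : count (fun x => t < x) M_vals = count (fun x => t < x) [seq s <- M_vals | s != t].
    by rewrite [RHS]count_filter; apply: eq_count => x /=; case: ltgtP.
  by rewrite -big_filter; apply: prod_subr_sign; rewrite mem_filter eqxx.
rewrite /residue; set c := count _ _ in PW_sign PM_sign.
set PW := \prod_(_ <- _) _ in PW_sign *; set PM := \prod_(_ <- _ | _) _ in PM_sign *.
have PM_neq0 : PM != 0 by apply: contraTneq PM_sign => ->; rewrite mulr0 ltxx.
have -> : PW / PM = - (((-1) ^+ c.+1 * PW) / ((-1) ^+ c * PM)).
  by rewrite exprS; field; rewrite PM_neq0 signr_eq0.
by rewrite oppr_lt0 divr_gt0.
Qed.

Lemma r_sqr t : t \in M_vals -> r_ lam mu t ^+ 2 = - residue W_vals M_vals t.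
Proof.
move=> tM; have Mt : is_M lam mu t by rewrite -mem_M_vals.
have t_vals : t \in vals_mu mu by move: tM; rewrite mem_filter => /andP[].
rewrite /r_ t_vals Mt sqr_sqrtr r2_exprE // oppr_ge0 ltW //; exact: residue_lt0.
Qed.

Lemma C_E m : ~~ is_M lam mu m ->
  C_ lam mu m = - (\prod_(w <- W_vals) (m - w) / \prod_(s <- M_vals) (m - s)).
Proof.
move=> not_Mm; have mM : m \notin M_vals by rewrite mem_M_vals.
rewrite prod_subr_partial_fraction ?uniq_M_vals ?size_W_vals // sum_W_vals_sub_M_vals.
rewrite /C_ -[X in _ + X]big_filter -/M_vals.
rewrite (eq_big_seq (fun t => - (residue W_vals M_vals t / (m - t)))).
  by rewrite sumrN; ring.
by move=> t tM; rewrite r_sqr // mulNr.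
Qed.

End Interlacing.

Theorem lemma4p5 (R : rcfType) (n : nat) (lam : 'I_n.+1 -> R) (mu : 'I_n -> R) :
  (forall i j : 'I_n.+1, (i <= j)%N -> lam j <= lam i) ->
  (forall i j : 'I_n, (i <= j)%N -> mu j <= mu i) ->
  (forall i : 'I_n, mu i <= lam (widen_ord (leqnSn n) i) /\ lam (lift ord0 i) <= mu i) ->
  forall m : R, m \in vals_mu mu -> ~~ is_M lam mu m ->
  (C_ lam mu m = 0 <-> is_W lam mu m).
Proof.
move=> _ _ interlacing m _ not_Mm.
have C0_W : (C_ lam mu m == 0) = is_W lam mu m.
  rewrite C_E // oppr_eq0 mulf_eq0 invr_eq0 !prod_subr_eq0.
  by rewrite mem_W_vals mem_M_vals (negPf not_Mm) orbF.
by rewrite -C0_W; split=> /eqP.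
Qed.
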